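(* Let $A$ be a random variable with $\mathbb P(A>0)=1$ and law $\rho$. If $\mu$ is a solution of equation (2) for $\rho$ and $\eta\sim\mu$ satisfies $\mathbb E\eta^{p+1}<\infty$ for some $p>0$, then $\mathbb E A^p<1$.
   Context: For a probability measure $\nu$ on $[0,\infty)$ with mean $m\in(0,\infty)$, its size-biased distribution is $\nu_{sb}(dx)=m^{-1}x\,\nu(dx)$. A probability measure $\mu$ on $[0,\infty)$ with mean in $(0,\infty)$ is a solution of equation (2) for $\rho$ if $\eta_{sb}\overset{d}{=}A\eta_{sb}+\eta$, where $\eta\sim\mu$, $\eta_{sb}\sim\mu_{sb}$ and $A\sim\rho$ are mutually independent. *)

From HB Require Import structures.
From mathcomp Require Import all_boot all_order all_algebra.
From mathcomp Require Import all_classical all_reals all_analysis.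
Set Implicit Arguments. Unset Strict Implicit. Unset Printing Implicit Defensive.
Import Order.TTheory GRing.Theory Num.Theory.
Local Open Scope classical_set_scope.
Local Open Scope ring_scope.
Local Open Scope ereal_scope.

Definition mean (R : realType) (mu : set R -> \bar R) : \bar R :=
  \int[mu]_x (x%:E).

Definition size_biased (R : realType) (mu : set R -> \bar R) (B : set R) : \bar R :=
  ((fine (mean mu))^-1)%:E * \int[mu]_(x in B) (x%:E).

(* mu is a solution of equation (2) for rho:
   mu is a probability measure on [0,oo) with mean in (0,oo), and
   eta_sb =d A eta_sb + eta, with A ~ rho, eta_sb ~ mu_sb, eta ~ mu independent,
   i.e. the law of eta_sb equals the image of the product measure
   rho (x) mu_sb (x) mu under (a, x, y) |-> a * x + y. *)
Definition solution_eq2 (R : realType) (rho mu : probability R R) : Prop :=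
  mu [set x : R | (0 <= x)%R] = 1 /\
  0 < mean mu < +oo /\
  forall B : set R, measurable B ->
    size_biased mu B =
    ((rho \x size_biased mu) \x mu)
      [set z : (R * R) * R | B (z.1.1 * z.1.2 + z.2)%R].

(* Let q t := (max t 0)^p and let A ~ rho, eta_sb ~ mu_sb, eta ~ mu be
   independent. Equation (2) gives E q(eta_sb) = E q(A eta_sb + eta), and
   q(A eta_sb + eta) >= q(A) q(eta_sb) 1{eta >= 0}, with strict inequality on
   {A > 0, eta_sb >= 0, eta > 0}, an event of positive probability since mu has
   a positive mean. The right-hand side has expectation E q(A) E q(eta_sb), and
   E q(eta_sb) = E eta^(p+1) / E eta is finite, so E A^p = E q(A) < 1. *)

From HB Require Import structures.
From mathcomp Require Import all_boot all_order all_algebra.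
From mathcomp Require Import all_classical all_reals all_analysis.
From mathcomp Require Import measurable_realfun.
Set Implicit Arguments. Unset Strict Implicit. Unset Printing Implicit Defensive.
Import Order.TTheory GRing.Theory Num.Theory.
Local Open Scope classical_set_scope.
Local Open Scope ring_scope.
Local Open Scope ereal_scope.

Section density_measure.
Context d (T : measurableType d) (R : realType) (mu : {measure set T -> \bar R}).

(* [mg] and [g0] are arguments only so that the measure instance below can be
   canonical. *)
Definition density_measure {g : T -> R} (mg : measurable_fun [set: T] g)
    (g0 : forall x, (0 <= g x)%R) (A : set T) : \bar R :=
  \int[mu]_(x in A) (g x)%:E.

Variables (g : T -> R) (mg : measurable_fun [set: T] g).
Variable g0 : forall x, (0 <= g x)%R.

Local Notation nu := (density_measure mg g0).

Let nu0 : nu set0 = 0. Proof. exact: integral_set0. Qed.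

Let nu_ge0 A : 0 <= nu A.
Proof. by apply: integral_ge0 => x _; rewrite lee_fin. Qed.

Let nu_sigma_additive : semi_sigma_additive nu.
Proof.
apply: semi_sigma_additive_nng_induced => [|x]; first exact/measurable_EFinP.
by rewrite lee_fin.
Qed.

HB.instance Definition _ :=
  isMeasure.Build _ _ _ nu nu0 nu_ge0 nu_sigma_additive.

Import HBNNSimple.

Let integral_density_measure_nnsfun (h : {nnsfun T >-> R}) :
  \int[nu]_x (h x)%:E = \int[mu]_x ((h x)%:E * (g x)%:E).
Proof.
have hr_ge0 r x : 0 <= (r * \1_(h @^-1` [set r]) x)%:E.
  exact: nnfun_muleindic_ge0.
transitivity (\int[mu]_x \sum_(r \in range h)
    ((r * \1_(h @^-1` [set r]) x)%:E * (g x)%:E)); last first.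
  apply: eq_integral => x _.
  by rewrite -ge0_mule_fsuml// fsumEFin// -fimfunE.
rewrite ge0_integral_fsum//; first last.
- by move=> r x _; rewrite mule_ge0// lee_fin.
- move=> r; apply: emeasurable_funM; last exact/measurable_EFinP.
  by apply/measurable_EFinP; exact: measurable_funM.
rewrite integralT_nnsfun sintegralE; apply: eq_fsbigr => r /set_mem[x _ <-].
under eq_integral do rewrite EFinM -muleA.
rewrite ge0_integralZl ?lee_fin//; first last.
- by move=> y _; rewrite -EFinM lee_fin mulr_ge0.
- by apply/measurable_EFinP; apply: measurable_funM.
congr (_ * _); rewrite /= /density_measure integral_mkcond epatch_indic.
by apply: eq_integral => y _; rewrite muleC.
Qed.

Lemma ge0_integral_density_measure (f : T -> \bar R) :
    measurable_fun [set: T] f -> (forall x, 0 <= f x) ->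
  \int[nu]_x f x = \int[mu]_x (f x * (g x)%:E).
Proof.
move=> mf f0; pose h := nnsfun_approx measurableT mf.
have hf x : (EFin \o h n) x @[n --> \oo] --> f x.
  exact: cvg_nnsfun_approx.
have nd_h x : {homo (fun n => (h n x)%:E) : m n / (m <= n)%N >-> m <= n}.
  by move=> m n mn; rewrite lee_fin; exact/lefP/nd_nnsfun_approx.
have nu_lim : \int[nu]_x f x = lim (\int[nu]_x (h n x)%:E @[n --> \oo]).
  rewrite -monotone_convergence//.
  - by apply: eq_integral => x _; apply/esym/cvg_lim => //; exact: hf.
  - by move=> n; exact/measurable_EFinP.
  - by move=> n x _; rewrite lee_fin.
have mu_lim : \int[mu]_x (f x * (g x)%:E) =
    lim (\int[mu]_x ((h n x)%:E * (g x)%:E) @[n --> \oo]).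
  rewrite -monotone_convergence//.
  - by apply: eq_integral => x _; apply/esym/cvg_lim => //; exact: cvgeZr (hf x).
  - move=> n; apply: emeasurable_funM; exact/measurable_EFinP.
  - by move=> n x _; rewrite -EFinM lee_fin mulr_ge0.
  - by move=> x _ m n mn; apply: lee_wpmul2r; [rewrite lee_fin|exact: nd_h].
rewrite nu_lim mu_lim.
by under eq_fun do rewrite integral_density_measure_nnsfun.
Qed.

End density_measure.

Section integral_lt.
Context d (T : measurableType d) (R : realType) (mu : {measure set T -> \bar R}).

Lemma ge0_integral_gt0 (h : T -> \bar R) (S : set T) :
    measurable S -> measurable_fun [set: T] h -> (forall x, 0 <= h x) ->
    (forall x, S x -> 0 < h x) -> 0 < mu S ->
  0 < \int[mu]_x h x.
Proof.
move=> mS mh h0 Sh muS; rewrite lt0e integral_ge0 ?andbT//; apply/eqP => h_eq0.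
have : \int[mu]_(x in [set: T]) `|h x| = 0.
  by rewrite -h_eq0; apply: eq_integral => x _; rewrite gee0_abs.
move=> /(ae_eq_integral_abs mu measurableT mh) [N [mN muN0 hN]].
move: muS; rewrite (subset_measure0 mS mN)// ?ltxx// => x Sx.
by apply: hN => /= /(_ I) hx0; move: (Sh x Sx); rewrite hx0 ltxx.
Qed.

Lemma lt_integral (f g : T -> \bar R) (S : set T) :
    measurable S -> measurable_fun [set: T] f -> measurable_fun [set: T] g ->
    (forall x, 0 <= f x) -> (forall x, f x <= g x) ->
    (forall x, S x -> f x < g x) -> (forall x, g x \is a fin_num) ->
    0 < mu S -> \int[mu]_x g x < +oo ->
  \int[mu]_x f x < \int[mu]_x g x.
Proof.
move=> mS mf mg f0 fg Sfg gfin muS g_lty.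
have ffin x : f x \is a fin_num.
  by rewrite ge0_fin_numE// (le_lt_trans (fg x))// ltey_eq gfin.
have gfE : \int[mu]_x g x = \int[mu]_x f x + \int[mu]_x (g x - f x).
  rewrite -ge0_integralD//; first last.
  - exact: emeasurable_funB.
  - by move=> x _; rewrite sube_ge0 ?ffin.
  by apply: eq_integral => x _; rewrite addeC subeK ?ffin.
have f_fin : \int[mu]_x f x \is a fin_num.
  rewrite ge0_fin_numE ?integral_ge0//; apply: le_lt_trans g_lty.
  exact: ge0_le_integral.
rewrite gfE lteDl//; apply: (@ge0_integral_gt0 _ S mS).
- exact: emeasurable_funB.
- by move=> x; rewrite sube_ge0 ?ffin.
- by move=> x Sx; rewrite sube_gt0 ?ffin ?Sfg.
- exact: muS.
Qed.

End integral_lt.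

Section ge0_integral_product.
Context d1 d2 (T1 : measurableType d1) (T2 : measurableType d2) (R : realType).
Variables (m1 : {sigma_finite_measure set T1 -> \bar R})
  (m2 : {sigma_finite_measure set T2 -> \bar R}).

Lemma ge0_integral_product_mul (f : T1 -> \bar R) (g : T2 -> \bar R) :
    measurable_fun [set: T1] f -> measurable_fun [set: T2] g ->
    (forall x, 0 <= f x) -> (forall y, 0 <= g y) ->
  \int[m1 \x m2]_z (f z.1 * g z.2) = \int[m1]_x f x * \int[m2]_y g y.
Proof.
move=> mf mg f0 g0; rewrite fubini_tonelli1//=; last 2 first.
- by apply: emeasurable_funM; apply: measurableT_comp.
- by move=> z; rewrite mule_ge0.
rewrite /fubini_F -ge0_integralZr ?integral_ge0//.
by apply: eq_integral => x _; rewrite /= ge0_integralZl.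
Qed.

End ge0_integral_product.

Section ae_ge0_integral.
Context d (T : measurableType d) (R : realType) (mu : {measure set T -> \bar R}).
Import HBNNSimple.

Lemma ae_ge0_integral_ge0 (f : T -> \bar R) (N A : set T) :
    measurable N -> mu N = 0 -> measurable_fun [set: T] f ->
    (forall x, ~ N x -> 0 <= f x) ->
  0 <= \int[mu]_(x in A) f x.
Proof.
move=> mN muN0 mf f0.
have negf0 : \int[mu]_x f^\- x = 0.
  rewrite -(integral0 mu [set: T]); apply: ae_eq_integral => //.
  - exact: measurable_funeneg.
  exists N; split => // x /= /not_implyP[_]; apply: contra_notP => Nx.
  by rewrite funenegE; apply/max_idPr; rewrite leeNl oppe0 f0.
rewrite integralE; suff -> : \int[mu]_(x in A) f^\- x = 0.
  by rewrite sube0 integral_ge0// => x _; exact: funepos_ge0.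
apply/eqP; rewrite eq_le integral_ge0 ?andbT; last first.
  by move=> x _; exact: funeneg_ge0.
(* [A] need not be measurable: go through the supremum over simple functions. *)
rewrite integral_mkcond ge0_integralTE => [|x]; last exact: erestrict_ge0.
apply: ge_ereal_sup => _ [h hf <-]; rewrite -negf0 -integralT_nnsfun.
apply: ge0_le_integral => //.
- by move=> x _; rewrite lee_fin.
- exact/measurable_EFinP.
- exact: measurable_funeneg.
move=> x _; apply: (le_trans (hf x)); rewrite patchE; case: ifPn => // _.
exact: funeneg_ge0.
Qed.

End ae_ge0_integral.

Section size_biased_law.
Context (R : realType).

Lemma measurable_nonneg : measurable [set x : R | (0 <= x)%R].
Proof. by rewrite -set_itvcy; exact: measurable_itv. Qed.

Lemma measurable_pos : measurable [set x : R | (0 < x)%R].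
Proof. by rewrite -set_itvoy; exact: measurable_itv. Qed.

Lemma measurable_neg : measurable [set x : R | (x < 0)%R].
Proof. by rewrite -set_itvNyo; exact: measurable_itv. Qed.

Lemma setC_nonneg : ~` [set x : R | (0 <= x)%R] = [set x | (x < 0)%R].
Proof. by apply/seteqP; split => x /=; rewrite ltNge => /negP. Qed.

Lemma probability_neg0 (P : probability R R) :
  P [set x | (0 <= x)%R] = 1 -> P [set x | (x < 0)%R] = 0.
Proof.
move=> P_nonneg; rewrite -setC_nonneg probability_setC ?P_nonneg ?subee//.
exact: measurable_nonneg.
Qed.

Lemma measurable_max0 : measurable_fun [set: R] (fun x => Num.max x 0%R).
Proof. exact: (measurable_maxr (f := id) (g := cst 0%R)). Qed.

Lemma max0_ge0 (x : R) : (0 <= Num.max x 0)%R.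
Proof. by rewrite le_max lexx orbT. Qed.

(* As for [density_measure], the hypotheses only make the probability instance
   below canonical: [size_biased_law] is [size_biased mu] itself. *)
Definition size_biased_law (mu : probability R R)
    (mu_nonneg : mu [set x | (0 <= x)%R] = 1) (mean_mu : 0 < mean mu < +oo) :
  set R -> \bar R := size_biased mu.

Variable mu : probability R R.
Hypotheses (mu_nonneg : mu [set x | (0 <= x)%R] = 1)
  (mean_mu : 0 < mean mu < +oo).

Local Notation nu := (density_measure mu measurable_max0 max0_ge0).
Local Notation m := (fine (mean mu)).
Local Notation sb := (size_biased_law mu_nonneg mean_mu).

Lemma integral_max0 B : measurable B ->
  \int[mu]_(x in B) x%:E = \int[mu]_(x in B) (Num.max x 0)%:E.
Proof.
move=> mB; apply: ae_eq_integral => //.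
- by apply/measurable_EFinP/measurable_funTS; exact: measurable_max0.
exists [set x | (x < 0)%R]; split; [exact: measurable_neg|exact: probability_neg0|].
move=> x /= /not_implyP[_]; apply: contra_notP => /negP.
by rewrite -leNgt => /max_idPl->.
Qed.

Lemma fin_mean : mean mu \is a fin_num.
Proof. by case/andP: mean_mu => m_gt0 m_lty; rewrite ge0_fin_numE// ltW. Qed.

Lemma mean_gt0 : (0 < m)%R.
Proof. by case/andP: mean_mu => m_gt0 _; rewrite -lte_fin fineK// fin_mean. Qed.

Let invm_ge0 : (0 <= m^-1)%R. Proof. by rewrite invr_ge0 ltW// mean_gt0. Qed.

Lemma size_biased_mscale A : measurable A ->
  size_biased mu A = mscale (NngNum invm_ge0) nu A.
Proof. by move=> mA; rewrite /size_biased /= /density_measure integral_max0. Qed.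

Let sb0 : sb set0 = 0.
Proof. by rewrite /size_biased_law /size_biased integral_set0 mule0. Qed.

(* Nonnegativity is required on every set, measurable or not. *)
Let sb_ge0 A : 0 <= sb A.
Proof.
rewrite mule_ge0 ?lee_fin//; apply: (ae_ge0_integral_ge0 A measurable_neg).
- exact: probability_neg0.
- exact/measurable_EFinP.
- by move=> x /negP; rewrite -leNgt lee_fin.
Qed.

Let sb_sigma_additive : semi_sigma_additive sb.
Proof.
move=> F mF tF mUF; rewrite /size_biased_law size_biased_mscale//.
under eq_fun do under eq_bigr do rewrite size_biased_mscale//.
exact: measure_semi_sigma_additive.
Qed.

HB.instance Definition _ := isMeasure.Build _ _ _ sb sb0 sb_ge0 sb_sigma_additive.

Let sbT : sb [set: R] = 1.
Proof.
rewrite /size_biased_law /size_biased -/(mean mu) -[mean mu]fineK ?fin_mean//.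
by rewrite -EFinM mulVf ?gt_eqF ?mean_gt0.
Qed.

HB.instance Definition _ := Measure_isProbability.Build _ _ _ sb sbT.

Lemma ge0_integral_size_biased_law (f : R -> \bar R) :
    measurable_fun [set: R] f -> (forall x, 0 <= f x) ->
  \int[sb]_x f x = m^-1%:E * \int[mu]_x (f x * (Num.max x 0)%:E).
Proof.
move=> mf f0; rewrite (eq_measure_integral (mscale (NngNum invm_ge0) nu)).
  by rewrite ge0_integral_mscale// ge0_integral_density_measure.
by move=> A mA _; exact: size_biased_mscale.
Qed.

Lemma size_biased_law_nonneg : sb [set x | (0 <= x)%R] = 1.
Proof.
rewrite -[X in sb X]setCK setC_nonneg probability_setC; last exact: measurable_neg.
rewrite [X in 1 - X](_ : _ = 0) ?sube0//= /size_biased_law.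
rewrite size_biased_mscale; last exact: measurable_neg.
rewrite /mscale /= /density_measure integral0_eq ?mule0//.
by move=> x /= /ltW/max_idPr->.
Qed.

Lemma probability_pos_gt0 : 0 < mu [set x | (0 < x)%R].
Proof.
rewrite lt0e measure_ge0 andbT; apply/eqP => mu_pos0.
suff mean0 : mean mu = 0 by move: mean_mu; rewrite mean0 ltxx.
rewrite /mean integral_max0// (ae_eq_integral (cst 0)) ?integral0//.
- by apply/measurable_EFinP; exact: measurable_max0.
exists [set x | (0 < x)%R]; split => //; first exact: measurable_pos.
move=> x /= /not_implyP[_]; apply: contra_notP => /negP.
by rewrite -leNgt => /max_idPr->.
Qed.

End size_biased_law.

Lemma max0M_le (R : realDomainType) (a x y : R) : (0 <= y)%R ->
  (Num.max a 0 * Num.max x 0 <= Num.max (a * x + y) 0)%R.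
Proof.
move=> y0; have [a0|a0] := leP 0%R a; have [x0|x0] := leP 0%R x;
  rewrite ?mul0r ?mulr0 le_max ?lexx ?orbT//.
by rewrite lerDl y0.
Qed.

Section proposition1p2.
Variables (R : realType) (rho mu : probability R R) (p : R).
Hypotheses (rho_pos : rho [set a | (0 < a)%R] = 1)
  (mu_nonneg : mu [set x | (0 <= x)%R] = 1) (mean_mu : 0 < mean mu < +oo)
  (eq2 : forall B, measurable B ->
    size_biased mu B = ((rho \x size_biased mu) \x mu)
      [set z : (R * R) * R | B (z.1.1 * z.1.2 + z.2)%R])
  (p_gt0 : (0 < p)%R) (moment_lty : \int[mu]_x ((x `^ (p + 1))%:E) < +oo).

Local Notation sb := (size_biased_law mu_nonneg mean_mu).
(* The law of (A, eta_sb, eta); it is convertible to the product in [eq2]. *)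
Local Notation Q := ((rho \x sb) \x mu).

Definition affine (z : (R * R) * R) : R := (z.1.1 * z.1.2 + z.2)%R.

Lemma measurable_affine : measurable_fun [set: (R * R) * R] affine.
Proof.
apply: measurable_funD; last exact: measurable_snd.
by apply: measurable_funM; apply: measurableT_comp.
Qed.

HB.instance Definition _ :=
  isMeasurableFun.Build _ _ _ _ affine measurable_affine.

Lemma size_biased_law_distribution B : measurable B ->
  sb B = distribution Q affine B.
Proof. exact: eq2. Qed.

Definition pos_powR (t : R) : \bar R := (Num.max t 0 `^ p)%:E.

Local Notation I_sb := (\int[sb]_x pos_powR x).

Lemma measurable_pos_powR : measurable_fun [set: R] pos_powR.
Proof.
apply/measurable_EFinP; apply: (measurableT_comp (measurable_powR p)).
exact: measurable_max0.
Qed.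

Lemma pos_powR_ge0 t : 0 <= pos_powR t. Proof. by rewrite lee_fin powR_ge0. Qed.

Lemma integral_pos_powR_size_biased : I_sb = \int[Q]_z pos_powR (affine z).
Proof.
rewrite (eq_measure_integral (distribution Q affine)); last first.
  by move=> A mA _; exact: size_biased_law_distribution.
rewrite ge0_integral_distribution//; first exact: measurable_pos_powR.
exact: pos_powR_ge0.
Qed.

Lemma integral_pos_powR_size_biased_lty : I_sb < +oo.
Proof.
rewrite ge0_integral_size_biased_law; last 2 first.
- exact: measurable_pos_powR.
- exact: pos_powR_ge0.
apply: lte_mul_pinfty; [by rewrite lee_fin invr_ge0 ltW// mean_gt0|by []|].
apply: (le_lt_trans _ moment_lty); apply: ge0_le_integral => //.
- by move=> x _; rewrite mule_ge0 ?pos_powR_ge0// lee_fin max0_ge0.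
- apply: emeasurable_funM; first exact: measurable_pos_powR.
  by apply/measurable_EFinP; exact: measurable_max0.
- by apply/measurable_EFinP; exact: measurable_powR.
move=> x _; rewrite -EFinM lee_fin; have [x0|x0] := leP 0%R x; last first.
  by rewrite mulr0 powR_ge0.
by rewrite powRD ?powRr1// gt_eqF// ltr_wpDl// ltW.
Qed.

Definition minorant (z : (R * R) * R) : \bar R :=
  pos_powR z.1.1 * pos_powR z.1.2 * (\1_[set y : R | (0 <= y)%R] z.2)%:E.

Lemma measurable_minorant : measurable_fun [set: (R * R) * R] minorant.
Proof.
rewrite /minorant; apply: emeasurable_funM; first apply: emeasurable_funM.
- apply: measurableT_comp measurable_pos_powR _.
  exact: measurableT_comp measurable_fst measurable_fst.
- apply: measurableT_comp measurable_pos_powR _.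
  exact: measurableT_comp measurable_snd measurable_fst.
- apply/measurable_EFinP; apply: measurableT_comp measurable_snd.
  by apply: measurable_indic; exact: measurable_nonneg.
Qed.

Lemma minorant_ge0 z : 0 <= minorant z.
Proof. by rewrite !mule_ge0 ?pos_powR_ge0 ?lee_fin. Qed.

Lemma integral_minorant : \int[Q]_z minorant z = \int[rho]_a pos_powR a * I_sb.
Proof.
have mq2 : measurable_fun [set: R * R] (fun w => pos_powR w.1 * pos_powR w.2).
  by apply: emeasurable_funM; apply: measurableT_comp measurable_pos_powR _.
have q2_ge0 w : 0 <= pos_powR w.1 * pos_powR w.2.
  by rewrite mule_ge0 ?pos_powR_ge0.
have mnonneg : measurable_fun [set: R]
    (fun y => (\1_[set x : R | (0 <= x)%R] y : R)%:E).
  by apply/measurable_EFinP; apply: measurable_indic; exact: measurable_nonneg.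
have -> : \int[Q]_z minorant z =
    \int[rho \x sb]_w (pos_powR w.1 * pos_powR w.2) *
    \int[mu]_y (\1_[set x : R | (0 <= x)%R] y)%:E.
  exact: (@ge0_integral_product_mul _ _ _ _ _ (rho \x sb : probability _ R) mu
    _ _ mq2 mnonneg q2_ge0).
rewrite integral_indic// ?setIT; last exact: measurable_nonneg.
rewrite [X in _ * X](_ : _ = 1) ?mule1; last exact: mu_nonneg.
exact: (@ge0_integral_product_mul _ _ _ _ _ rho sb _ _
  measurable_pos_powR measurable_pos_powR pos_powR_ge0 pos_powR_ge0).
Qed.

Lemma minorant_le z : minorant z <= pos_powR (affine z).
Proof.
case: z => [[a x] y]; rewrite /minorant /pos_powR /affine indicE /=.
case: (boolP (y \in _)) => [/set_mem/= y0|_]; last first.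
  by rewrite mule0 lee_fin powR_ge0.
rewrite mule1 -EFinM lee_fin -powRM ?max0_ge0//.
apply: ge0_ler_powR; [exact: ltW| |exact: max0_ge0|exact: max0M_le].
by rewrite nnegrE mulr_ge0 ?max0_ge0.
Qed.

Definition minorant_strict_set : set ((R * R) * R) :=
  ([set a | (0 < a)%R] `*` [set x | (0 <= x)%R]) `*` [set y | (0 < y)%R].

Lemma measurable_minorant_strict_set : measurable minorant_strict_set.
Proof.
apply: measurableX; last exact: measurable_pos.
by apply: measurableX; [exact: measurable_pos|exact: measurable_nonneg].
Qed.

Lemma minorant_lt z : minorant_strict_set z -> minorant z < pos_powR (affine z).
Proof.
case: z => [[a x] y] [[/= a0 x0] /= y0].
rewrite /minorant /pos_powR /affine indicE mem_set /=; last exact: ltW.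
have ax0 : (0 <= a * x)%R by rewrite mulr_ge0// ltW.
rewrite mule1 -EFinM lte_fin -powRM ?max0_ge0// (max_l (ltW a0)) (max_l x0).
rewrite max_l; last by rewrite addr_ge0// ltW.
apply: gt0_ltr_powR => //; last by rewrite ltrDl.
by rewrite nnegrE addr_ge0// ltW.
Qed.

Lemma minorant_strict_set_gt0 : 0 < Q minorant_strict_set.
Proof.
rewrite /minorant_strict_set product_measure1E; last 2 first.
- by apply: measurableX; [exact: measurable_pos|exact: measurable_nonneg].
- exact: measurable_pos.
rewrite /= product_measure1E; last 2 first.
- exact: measurable_pos.
- exact: measurable_nonneg.
rewrite [X in X * _ * _](_ : _ = 1); last exact: rho_pos.
rewrite [X in _ * X * _](_ : _ = 1); last exact: size_biased_law_nonneg.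
by rewrite !mul1e; exact: probability_pos_gt0.
Qed.

Lemma integral_pos_powR_lt : \int[rho]_a pos_powR a * I_sb < I_sb.
Proof.
rewrite -integral_minorant [ltRHS]integral_pos_powR_size_biased.
apply: (lt_integral measurable_minorant_strict_set).
- exact: measurable_minorant.
- exact: measurableT_comp measurable_pos_powR measurable_affine.
- exact: minorant_ge0.
- exact: minorant_le.
- exact: minorant_lt.
- by [].
- exact: minorant_strict_set_gt0.
- rewrite -integral_pos_powR_size_biased.
  exact: integral_pos_powR_size_biased_lty.
Qed.

Lemma integral_powR_pos_powR :
  \int[rho]_a (a `^ p)%:E = \int[rho]_a pos_powR a.
Proof.
apply: ae_eq_integral => //.
- by apply/measurable_EFinP; exact: measurable_powR.
- exact: measurable_pos_powR.
exists (~` [set a | (0 < a)%R]); split.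
- by apply: measurableC; exact: measurable_pos.
- by have := probability_setC rho (@measurable_pos R); rewrite rho_pos subee.
- by move=> a /= /not_implyP[_ qa] a0; apply: qa; rewrite /pos_powR max_l// ltW.
Qed.

Lemma powR_moment_lt1 : \int[rho]_a (a `^ p)%:E < 1.
Proof.
rewrite integral_powR_pos_powR ltNge; apply/negP => moment_ge1.
have := integral_pos_powR_lt; rewrite ltNge => /negP; apply.
rewrite -{1}(mul1e I_sb); apply: lee_wpmul2r moment_ge1.
by apply: integral_ge0 => x _; exact: pos_powR_ge0.
Qed.

End proposition1p2.

Theorem proposition1p2 (R : realType) (rho mu : probability R R) (p : R) :
  rho [set a : R | (0 < a)%R] = 1 ->
  solution_eq2 rho mu ->
  (0 < p)%R ->
  \int[mu]_x ((x `^ (p + 1))%:E) < +oo ->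
  \int[rho]_a ((a `^ p)%:E) < 1.
Proof.
move=> rho_pos [mu_nonneg [mean_mu eq2]] p_gt0 moment_lty.
exact: (powR_moment_lt1 rho_pos mu_nonneg mean_mu eq2 p_gt0 moment_lty).
Qed.
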